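(* Let $0<\alpha<1$, $\sigma>0$, $N_1$ a positive integer, $h=\sigma^2\alpha^2$, $T=\sigma\alpha\sqrt{N_1}$, $\kappa=\frac\alpha{1-\alpha}$, and let $n\ge1$ be an integer. For $x\in(0,1]$ and complex $u\notin(-\infty,0]$ let $$f(u,x)=\frac{\sin(\alpha\pi)}{\alpha\pi}\frac{1}{2\sqrt u}\frac{xe^{\sqrt u-T}}{e^{\frac1\alpha(\sqrt u-T)}+x}$$ (principal branch of $\sqrt u$). Let $u^*=\frac{1+(1-2\alpha)\sqrt{4\alpha-4\alpha^2+1}}{2(1-\alpha)^2}$, $\gamma=\alpha\log\!\Big(\frac{\frac1\kappa\sqrt{u^*}+1}{\sqrt{u^*}-1}\Big)+\sqrt{u^*}$, $x^*=e^{\frac1\alpha(\gamma-T)}$, $M_0=2\max\left\{\frac{\sigma^2}{4},1+\mathrm{ceil}\!\left(\frac{9\pi^2}{\sigma^2}\right),2\,\mathrm{ceil}\!\left[\left(1+\sqrt{\pi/\sigma}\right)^4\right]\right\}$, and $\Upsilon=\{x\in[x^*,1]:(T+\alpha\log x)^2-\alpha^2\pi^2>M_0h\}$. For $x\in\Upsilon$ put $a=2\alpha\pi(T+\alpha\log x)$ and $u_0=(T+\alpha\log x)^2-\alpha^2\pi^2-ia$. Let $N_0>0$ be a fixed sufficiently large number, $\rho_0=\frac12\min\{\alpha^2\pi^2,2\pi\alpha\gamma,h/N_0\}$, and for $0<\rho\le\rho_0$ let $C^{\pm}_\rho=\{z=u_0+\rho e^{i\theta}:\theta:0\to\pm2\pi\}$.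 Then for arbitrary $\rho\in(0,\rho_0]$ it holds uniformly for $x\in\Upsilon$ that $$\left|\int_{C^{\pm}_\rho}f(u,x)e^{-i\frac{2n\pi}{h}u}\,\mathrm{d}u\right|=e^{(\rho-a)\frac{2n\pi}{h}}x^\alpha\,\mathcal{O}(1)$$ as $T\to+\infty$, where the constant in $\mathcal{O}(1)$ is independent of $x$, $h$, $\alpha$, $\sigma$, $\rho$ and $T$.
   Context: $\mathrm{ceil}(y)$ is the least integer $\ge y$. $u_0$ is a simple pole of $u\mapsto f(u,x)$. *)

From Stdlib Require Import Reals.
From Coquelicot Require Import Coquelicot.
Open Scope R_scope.

(* ceil y : least integer >= y  (up z is the least integer > z) *)
Definition Rceil (y : R) : R := - IZR (up (- y) - 1).

Definition Cexp (z : C) : C :=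
  (exp (Re z) * cos (Im z), exp (Re z) * sin (Im z)).

(* principal branch of the square root, valid for z outside (-oo,0]:
   the root with positive real part *)
Definition Csqrt (z : C) : C :=
  let r := sqrt ((Cmod z + Re z) / 2) in (r, Im z / (2 * r)).

Definition fA2 (alpha T : R) (u : C) (x : R) : C :=
  (RtoC (sin (alpha * PI) / (alpha * PI)) * / (2 * Csqrt u)
   * (RtoC x * Cexp (Csqrt u - RtoC T))
   / (Cexp ((Csqrt u - RtoC T) / RtoC alpha) + RtoC x))%C.

Definition hA2 (alpha sigma : R) : R := sigma ^ 2 * alpha ^ 2.
Definition TA2 (alpha sigma : R) (N1 : nat) : R := sigma * alpha * sqrt (INR N1).
Definition kappaA2 (alpha : R) : R := alpha / (1 - alpha).
Definition ustarA2 (alpha : R) : R :=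
  (1 + (1 - 2 * alpha) * sqrt (4 * alpha - 4 * alpha ^ 2 + 1)) / (2 * (1 - alpha) ^ 2).
Definition gammaA2 (alpha : R) : R :=
  alpha * ln ((/ kappaA2 alpha * sqrt (ustarA2 alpha) + 1) / (sqrt (ustarA2 alpha) - 1))
  + sqrt (ustarA2 alpha).
Definition xstarA2 (alpha T : R) : R := exp (/ alpha * (gammaA2 alpha - T)).
Definition M0A2 (sigma : R) : R :=
  2 * Rmax (sigma ^ 2 / 4)
           (Rmax (1 + Rceil (9 * PI ^ 2 / sigma ^ 2))
                 (2 * Rceil ((1 + sqrt (PI / sigma)) ^ 4))).

Definition UpsilonA2 (alpha sigma : R) (N1 : nat) (x : R) : Prop :=
  let T := TA2 alpha sigma N1 in
  xstarA2 alpha T <= x <= 1 /\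
  (T + alpha * ln x) ^ 2 - alpha ^ 2 * PI ^ 2 > M0A2 sigma * hA2 alpha sigma.

Definition aA2 (alpha T x : R) : R := 2 * alpha * PI * (T + alpha * ln x).
Definition u0A2 (alpha T x : R) : C :=
  ((T + alpha * ln x) ^ 2 - alpha ^ 2 * PI ^ 2, - aA2 alpha T x).

Definition rho0A2 (alpha sigma N0 : R) : R :=
  / 2 * Rmin (alpha ^ 2 * PI ^ 2)
             (Rmin (2 * PI * alpha * gammaA2 alpha) (hA2 alpha sigma / N0)).

(* contour integral over C^{s}_rho (s = 1 : theta from 0 to 2 pi,
   s = -1 : theta from 0 to -2 pi) of F, parametrised by
   z(theta) = u0 + rho e^{i theta}, dz = i rho e^{i theta} dtheta *)
Definition circ_int (F : C -> C) (u0 : C) (rho s : R) : C :=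
  RInt (V := C_R_CompleteNormedModule)
    (fun th : R => (F (u0 + RtoC rho * Cexp (0, th)) * ((0, rho) * Cexp (0, th)))%C)
    0 (s * (2 * PI)).

(* On the circle u = u0 + rho e^{i theta} put p = T + alpha log x and
   w0 = p - i alpha pi, so that u0 = w0^2.  Then
   (sqrt u - w0)(sqrt u + w0) = u - u0 has modulus rho, and since
   |sqrt u + w0| > p this keeps sqrt u within alpha/10 of w0.  As
   e^{(w0 - T)/alpha} = -x, the denominator of f equals
   x (1 - e^{(sqrt u - w0)/alpha}), whose modulus is at least
   x |sqrt u - w0| / (2 alpha).  Against the arc length rho =
   |sqrt u - w0| |sqrt u + w0| this small factor cancels, and the remaining
   factors are bounded by x^alpha e^{(rho - a) 2 n pi / h}: the integrand is
   O(x^alpha e^{(rho - a) 2 n pi / h} / rho) on the circle, and the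
   ML-inequality gives the claim with constant 6 pi.  The hypotheses
   x in Upsilon and rho <= rho0 with N0 >= 10 are used only to get
   p > alpha pi and rho <= alpha p / 10. *)

From Stdlib Require Import Reals Lra.
From Coquelicot Require Import Coquelicot.
Open Scope R_scope.

Lemma one_minus_cos_lb (b : R) : Rabs b <= 1 -> b ^ 2 / 3 <= 1 - cos b.
Proof.
  intros Hb. apply Rabs_le_between in Hb.
  assert (HPI : 3 < PI) by (generalize PI2_3_2; lra).
  destruct (cos_bound b 0) as [_ Hcos]; try lra.
  unfold cos_approx, cos_term in Hcos; simpl in Hcos.
  assert (0 <= b ^ 2 <= 1) by nra.
  nra.
Qed.

Lemma exp_le_compat (a b : R) : a <= b -> exp a <= exp b.
Proof. intros [H | H]; [left; apply exp_increasing, H | right; rewrite H; reflexivity]. Qed.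

Lemma exp_minus_1_sqr_lb (a : R) : - 2 / 5 <= a -> a ^ 2 / 2 <= (exp a - 1) ^ 2.
Proof.
  intros Ha. pose proof (exp_ineq1_le a) as Hexp.
  destruct (Rle_dec 0 a) as [Ha0 | Ha0]; [nra |].
  assert (Hinv : exp a * exp (- a) = 1) by (rewrite <- exp_plus, Rplus_opp_r; apply exp_0).
  assert (Hdist : - a <= (1 - exp a) * (1 - a)).
  { pose proof (exp_ineq1_le (- a)). pose proof (exp_pos a). nra. }
  assert (Hsq : a ^ 2 <= (1 - exp a) ^ 2 * (1 - a) ^ 2) by nra.
  assert ((1 - a) ^ 2 <= 2) by nra.
  nra.
Qed.

Lemma Cmod_Cexp (w : C) : Cmod (Cexp w) = exp (Re w).
Proof.
  unfold Cmod, Cexp, Re, Im; cbn [fst snd].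
  replace ((exp (fst w) * cos (snd w)) ^ 2 + (exp (fst w) * sin (snd w)) ^ 2)
    with (exp (fst w) ^ 2)
    by (pose proof (sin2_cos2 (snd w)) as H; unfold Rsqr in H; nra).
  apply sqrt_pow2. left; apply exp_pos.
Qed.

Lemma Cexp_add (v w : C) : Cexp (v + w) = (Cexp v * Cexp w)%C.
Proof.
  destruct v as [a b], w as [c d].
  unfold Cexp, Cmult, Cplus, Re, Im; cbn [fst snd].
  rewrite exp_plus, cos_plus, sin_plus. f_equal; ring.
Qed.

Lemma one_minus_Cexp_lb (w : C) :
  - 2 / 5 <= Re w -> Rabs (Im w) <= 1 -> Cmod w / 2 <= Cmod (1 - Cexp w).
Proof.
  destruct w as [a b]; unfold Re, Im; cbn [fst snd]. intros Ha Hb.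
  pose proof (one_minus_cos_lb b Hb). pose proof (exp_minus_1_sqr_lb a Ha).
  pose proof (exp_ineq1_le a). pose proof (sin2_cos2 b) as Hsc; unfold Rsqr in Hsc.
  apply Rsqr_incr_0_var; [| apply Cmod_ge_0].
  assert (Hw : Cmod (a, b) ^ 2 = a ^ 2 + b ^ 2) by (rewrite Cmod2_alt; reflexivity).
  assert (H1w : Cmod (1 - Cexp (a, b)) ^ 2
                = (exp a - 1) ^ 2 + 2 * exp a * (1 - cos b)).
  { rewrite Cmod2_alt. unfold Cexp, Cminus, Cplus, Copp, RtoC, Re, Im; cbn [fst snd].
    replace ((exp a - 1) ^ 2 + 2 * exp a * (1 - cos b)) with
      ((exp a - 1) ^ 2 + 2 * exp a * (1 - cos b)
       + exp a ^ 2 * (sin b * sin b + cos b * cos b - 1)) by (rewrite Hsc; ring).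
    ring. }
  unfold Rsqr. nra.
Qed.

Lemma Cmod_add_Re_pos (w : C) : Im w <> 0 -> 0 < Cmod w + Re w.
Proof.
  intros Hw. pose proof (Cmod2_alt w). pose proof (Cmod_ge_0 w).
  pose proof (Rsqr_pos_lt _ Hw). unfold Rsqr in *. nra.
Qed.

Lemma Re_Csqrt_pos (w : C) : Im w <> 0 -> 0 < Re (Csqrt w).
Proof.
  intros Hw. pose proof (Cmod_add_Re_pos w Hw).
  unfold Csqrt; cbn. apply sqrt_lt_R0. lra.
Qed.

Lemma Csqrt_sqr (w : C) : Im w <> 0 -> (Csqrt w * Csqrt w)%C = w.
Proof.
  intros Hw. pose proof (Re_Csqrt_pos w Hw) as Hr. pose proof (Cmod_add_Re_pos w Hw).
  pose proof (Cmod2_alt w) as Hmod.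
  destruct w as [a b]; unfold Re, Im in *; cbn [fst snd] in *.
  unfold Csqrt, Re, Im in *; cbn [fst snd] in *.
  set (S := Cmod (a, b)) in *. set (r := sqrt ((S + a) / 2)) in *.
  assert (Hr2 : r * r = (S + a) / 2) by (apply sqrt_sqrt; lra).
  assert (Hb2 : b / (2 * r) * (b / (2 * r)) = (S - a) / 2).
  { replace (b / (2 * r) * (b / (2 * r))) with (b ^ 2 / (4 * (r * r))) by (field; lra).
    rewrite Hr2. replace (b ^ 2) with ((S - a) * (S + a)) by nra. field. lra. }
  unfold Cmult; cbn [fst snd]. f_equal.
  - lra.
  - field. lra.
Qed.

Definition Ccontinuous (F : R -> C) (t : R) : Prop :=
  continuous (fun s => Re (F s)) t /\ continuous (fun s => Im (F s)) t.

Lemma Rcontinuous_plus (f g : R -> R) t :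
  continuous f t -> continuous g t -> continuous (fun s => f s + g s) t.
Proof. apply (continuous_plus f g). Qed.

Lemma Rcontinuous_opp (f : R -> R) t : continuous f t -> continuous (fun s => - f s) t.
Proof. apply (continuous_opp f). Qed.

Lemma Rcontinuous_mult (f g : R -> R) t :
  continuous f t -> continuous g t -> continuous (fun s => f s * g s) t.
Proof. apply (continuous_mult f g). Qed.

Lemma Rcontinuous_pow (f : R -> R) t n : continuous f t -> continuous (fun s => f s ^ n) t.
Proof.
  intros Hf; induction n as [| n IH]; simpl.
  - apply continuous_const.
  - apply Rcontinuous_mult; assumption.
Qed.

Lemma Ccontinuous_continuous (F : R -> C) t :
  Ccontinuous F t -> @continuous R_UniformSpace C_R_CompleteNormedModule F t.
Proof.
  intros [Hre Him]. apply filterlim_locally. intros eps.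
  apply filterlim_locally with (eps := eps) in Hre.
  apply filterlim_locally with (eps := eps) in Him.
  generalize (filter_and _ _ Hre Him). apply filter_imp.
  intros s [Hs1 Hs2]. split; assumption.
Qed.

Lemma Ccontinuous_const (c : C) t : Ccontinuous (fun _ => c) t.
Proof. split; apply continuous_const. Qed.

Lemma Ccontinuous_plus F G t :
  Ccontinuous F t -> Ccontinuous G t -> Ccontinuous (fun s => (F s + G s)%C) t.
Proof. intros [] []; split; apply Rcontinuous_plus; assumption. Qed.

Lemma Ccontinuous_minus F G t :
  Ccontinuous F t -> Ccontinuous G t -> Ccontinuous (fun s => (F s - G s)%C) t.
Proof.
  intros HF [HG1 HG2]. apply Ccontinuous_plus; [assumption |].
  split; apply Rcontinuous_opp; assumption.
Qed.

Lemma Ccontinuous_mult F G t :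
  Ccontinuous F t -> Ccontinuous G t -> Ccontinuous (fun s => (F s * G s)%C) t.
Proof.
  intros [] []; split; simpl.
  - apply Rcontinuous_plus; [| apply Rcontinuous_opp]; apply Rcontinuous_mult; assumption.
  - apply Rcontinuous_plus; apply Rcontinuous_mult; assumption.
Qed.

Lemma Ccontinuous_inv F t : Ccontinuous F t -> F t <> 0%C -> Ccontinuous (fun s => (/ F s)%C) t.
Proof.
  intros [Hre Him] HF.
  assert (Hden : continuous (fun s => fst (F s) ^ 2 + snd (F s) ^ 2) t)
    by (apply Rcontinuous_plus; apply Rcontinuous_pow; assumption).
  assert (Hden0 : fst (F t) ^ 2 + snd (F t) ^ 2 <> 0).
  { rewrite <- Cmod2_alt. apply pow_nonzero. intro E. apply HF, Cmod_eq_0, E. }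
  split; unfold Cinv, Re, Im; cbn [fst snd];
    apply Rcontinuous_mult; try (apply continuous_Rinv_comp; assumption).
  - exact Hre.
  - apply Rcontinuous_opp, Him.
Qed.

Lemma Ccontinuous_div F G t :
  Ccontinuous F t -> Ccontinuous G t -> G t <> 0%C -> Ccontinuous (fun s => (F s / G s)%C) t.
Proof. intros. apply Ccontinuous_mult; [| apply Ccontinuous_inv]; assumption. Qed.

Lemma Ccontinuous_exp F t : Ccontinuous F t -> Ccontinuous (fun s => Cexp (F s)) t.
Proof.
  intros [Hre Him]; split; unfold Cexp, Re, Im; cbn [fst snd]; apply Rcontinuous_mult.
  - apply continuous_exp_comp, Hre.
  - apply continuous_cos_comp, Him.
  - apply continuous_exp_comp, Hre.
  - apply continuous_sin_comp, Him.
Qed.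

Lemma Ccontinuous_sqrt F t :
  Ccontinuous F t -> Im (F t) <> 0 -> Ccontinuous (fun s => Csqrt (F s)) t.
Proof.
  intros [Hre Him] HF.
  assert (Hr : continuous (fun s => sqrt ((Cmod (F s) + Re (F s)) / 2)) t).
  { apply continuous_sqrt_comp, Rcontinuous_mult; [| apply continuous_const].
    apply Rcontinuous_plus; [| exact Hre].
    apply continuous_sqrt_comp, Rcontinuous_plus; apply Rcontinuous_pow; assumption. }
  pose proof (Re_Csqrt_pos (F t) HF) as Hr0. unfold Csqrt in Hr0; cbn in Hr0.
  split; unfold Csqrt; cbn zeta; [exact Hr |].
  unfold Im at 1; cbn [snd].
  apply Rcontinuous_mult; [exact Him |].
  apply continuous_Rinv_comp; [| lra].
  apply Rcontinuous_mult; [apply continuous_const | exact Hr].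
Qed.

Lemma norm_C_R (z : C) : @norm R_AbsRing C_R_NormedModule z = Cmod z.
Proof.
  destruct z as [a b].
  change (sqrt (Rabs a ^ 2 + Rabs b ^ 2) = sqrt (a ^ 2 + b ^ 2)).
  rewrite !pow2_abs. reflexivity.
Qed.

Lemma Cmod_circ_int_le (F : C -> C) (u0 : C) (rho s B : R) :
  0 <= rho -> (s = 1 \/ s = -1) ->
  (forall th, Ccontinuous (fun t => F (u0 + RtoC rho * Cexp (0, t))%C) th) ->
  (forall th, Cmod (F (u0 + RtoC rho * Cexp (0, th))%C) <= B) ->
  Cmod (circ_int F u0 rho s) <= 2 * PI * rho * B.
Proof.
  intros Hrho Hs Hcont Hbound. unfold circ_int.
  set (g := fun th => (F (u0 + RtoC rho * Cexp (0, th)) * ((0, rho) * Cexp (0, th)))%C).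
  assert (Hg : forall th, Ccontinuous g th).
  { intros th. apply Ccontinuous_mult; [apply Hcont |].
    apply Ccontinuous_mult; [apply Ccontinuous_const |].
    apply Ccontinuous_exp. split; [apply continuous_const | apply continuous_id]. }
  assert (Hlen : Rabs (s * (2 * PI) - 0) = 2 * PI).
  { pose proof PI_RGT_0. destruct Hs; subst s; [rewrite Rabs_right | rewrite Rabs_left]; lra. }
  replace (2 * PI * rho * B) with (Rabs (s * (2 * PI) - 0) * (rho * B)) by (rewrite Hlen; ring).
  rewrite <- norm_C_R.
  apply (norm_RInt_le_const_abs (V := C_R_NormedModule) g).
  - intros th _. rewrite norm_C_R. unfold g.
    assert (Hr : Cmod (0, rho) = rho).
    { unfold Cmod; cbn [fst snd]. replace (0 ^ 2 + rho ^ 2) with (rho ^ 2) by ring.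
      apply sqrt_pow2, Hrho. }
    rewrite !Cmod_mult, Cmod_Cexp, Hr. unfold Re; cbn [fst].
    rewrite exp_0, Rmult_1_r, Rmult_comm. apply Rmult_le_compat_l; auto.
  - apply (RInt_correct (V := C_R_CompleteNormedModule)), ex_RInt_continuous.
    intros th _. apply Ccontinuous_continuous, Hg.
Qed.

Lemma u0A2_square (al T x : R) :
  u0A2 al T x
  = (((T + al * ln x)%R, (- (al * PI))%R) * ((T + al * ln x)%R, (- (al * PI))%R))%C.
Proof. unfold u0A2, aA2, Cmult; cbn [fst snd]. f_equal; ring. Qed.

Lemma Rabs_sin_div_le (y : R) : 0 < y -> Rabs (sin y / y) <= / y.
Proof.
  intros Hy. unfold Rdiv. rewrite Rabs_mult, Rabs_inv, (Rabs_right y) by lra.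
  rewrite <- (Rmult_1_l (/ y)) at 2. apply Rmult_le_compat_r.
  - left; apply Rinv_0_lt_compat, Hy.
  - apply Rabs_le, SIN_bound.
Qed.

Section Circle.

Variables (al T x rho th : R).
Hypotheses (Hal : 0 < al < 1) (Hx : 0 < x) (Hp : al * PI < T + al * ln x)
  (Hrho : 0 < rho) (Hrho_p : rho <= al * (T + al * ln x) / 10).

Local Notation p := (T + al * ln x).
Local Notation w0 := (((T + al * ln x)%R, (- (al * PI))%R) : C).
Local Notation u := (u0A2 al T x + RtoC rho * Cexp (0, th))%C.
Local Notation z := (Csqrt u).

Let HPI : 3 < PI.
Proof. generalize PI2_3_2; lra. Qed.

Lemma Im_circle_neg : Im u < 0.
Proof.
  unfold u0A2, aA2, Cexp, Cplus, Cmult, RtoC, Re, Im; cbn [fst snd].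
  rewrite exp_0. pose proof (SIN_bound th). nra.
Qed.

Let Hu : Im u <> 0.
Proof. pose proof Im_circle_neg; lra. Qed.

Lemma Cmod_Csqrt_minus_mul_plus : Cmod (z - w0) * Cmod (z + w0) = rho.
Proof.
  rewrite <- Cmod_mult.
  replace ((z - w0) * (z + w0))%C with (RtoC rho * Cexp (0, th))%C.
  - rewrite Cmod_mult, Cmod_R, Cmod_Cexp, Rabs_right by lra.
    unfold Re; cbn [fst]. rewrite exp_0; ring.
  - replace ((z - w0) * (z + w0))%C with (z * z - w0 * w0)%C by ring.
    rewrite Csqrt_sqr, <- u0A2_square by exact Hu. ring.
Qed.

Lemma lt_Cmod_Csqrt_plus : p < Cmod (z + w0).
Proof.
  pose proof (Re_Csqrt_pos u Hu). pose proof (re_le_Cmod (z + w0)%C) as Hre.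
  apply Rabs_le_between in Hre. unfold Re, Cplus in *; cbn [fst] in *. lra.
Qed.

Lemma Cmod_Csqrt_minus_le : Cmod (z - w0) <= al / 10.
Proof.
  pose proof Cmod_Csqrt_minus_mul_plus. pose proof lt_Cmod_Csqrt_plus.
  pose proof (Cmod_ge_0 (z - w0)). assert (0 < al * PI) by nra.
  pose proof (Cmod_ge_0 (z + w0)).
  set (d := Cmod (z - w0)) in *. set (m := Cmod (z + w0)) in *.
  apply Rnot_lt_le. intros Hd. nra.
Qed.

Lemma Cmod_Csqrt_minus_pos : 0 < Cmod (z - w0).
Proof.
  pose proof Cmod_Csqrt_minus_mul_plus. pose proof (Cmod_ge_0 (z - w0)).
  destruct (Req_dec (Cmod (z - w0)) 0) as [E | E]; [rewrite E in *; lra | lra].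
Qed.

(* The pole: e^{(w0 - T)/alpha} = e^{log x - i pi} = -x. *)
Lemma fA2_denominator_eq :
  (Cexp ((z - RtoC T) / RtoC al) + RtoC x)%C = (RtoC x * (1 - Cexp ((z - w0) / RtoC al)))%C.
Proof.
  assert (Hal0 : RtoC al <> 0%C) by (intro E; injection E; lra).
  assert (Hw0 : (w0 - RtoC T = RtoC al * (ln x, (- PI)%R))%C).
  { unfold Cminus, Cplus, Copp, Cmult, RtoC; cbn [fst snd]. f_equal; ring. }
  assert (Hsplit : ((z - RtoC T) / RtoC al = (z - w0) / RtoC al + (ln x, (- PI)%R))%C).
  { replace (z - RtoC T)%C with ((z - w0) + (w0 - RtoC T))%C by ring.
    rewrite Hw0. field. exact Hal0. }
  assert (Hlog : Cexp (ln x, - PI) = RtoC (- x)).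
  { unfold Cexp, Re, Im, RtoC; cbn [fst snd].
    rewrite exp_ln, cos_neg, sin_neg, cos_PI, sin_PI by exact Hx. f_equal; ring. }
  rewrite Hsplit, Cexp_add, Hlog. rewrite RtoC_opp. ring.
Qed.

Lemma fA2_denominator_lb :
  x * Cmod (z - w0) / (2 * al) <= Cmod (Cexp ((z - RtoC T) / RtoC al) + RtoC x).
Proof.
  rewrite fA2_denominator_eq, Cmod_mult, Cmod_R, (Rabs_right x) by lra.
  set (w := ((z - w0) / RtoC al)%C).
  assert (Hw : Cmod w = Cmod (z - w0) / al).
  { unfold w. rewrite Cmod_div, Cmod_R, Rabs_right; [reflexivity | lra |].
    intro E; injection E; lra. }
  assert (Hw1 : Cmod w <= 1 / 10).
  { rewrite Hw. pose proof Cmod_Csqrt_minus_le. apply Rmult_le_reg_r with al; [lra |].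
    unfold Rdiv. rewrite Rmult_assoc, Rinv_l, Rmult_1_r by lra. lra. }
  pose proof (Rmax_Cmod w) as Hmax.
  pose proof (Rmax_l (Rabs (fst w)) (Rabs (snd w))).
  pose proof (Rmax_r (Rabs (fst w)) (Rabs (snd w))).
  pose proof (Rabs_le_between (fst w) (Cmod w)).
  pose proof (one_minus_Cexp_lb w) as Hlb. unfold Re, Im in Hlb.
  replace (x * Cmod (z - w0) / (2 * al)) with (x * (Cmod w / 2)) by (rewrite Hw; field; lra).
  apply Rmult_le_compat_l; [lra |]. apply Hlb; lra.
Qed.

Lemma Cmod_Cexp_Csqrt_minus_le : Cmod (Cexp (z - RtoC T)) <= 3 * Rpower x al.
Proof.
  rewrite Cmod_Cexp. unfold Rpower.
  pose proof (re_le_Cmod (z - w0)%C) as Hre. apply Rabs_le_between in Hre.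
  pose proof Cmod_Csqrt_minus_le.
  apply Rle_trans with (exp 1 * exp (al * ln x)).
  - rewrite <- exp_plus. apply exp_le_compat. unfold Re, Cminus, Cplus, Copp, RtoC in *; cbn [fst] in *.
    lra.
  - apply Rmult_le_compat_r; [left; apply exp_pos | apply exp_le_3].
Qed.

Lemma Cmod_Csqrt_plus_le : Cmod (z + w0) <= 3 * Cmod z.
Proof.
  pose proof Cmod_Csqrt_minus_le. pose proof (Re_Csqrt_pos u Hu).
  pose proof (re_le_Cmod (z - w0)%C) as Hd. apply Rabs_le_between in Hd.
  pose proof (re_le_Cmod z) as Hz. apply Rabs_le_between in Hz.
  replace (z + w0)%C with (RtoC 2 * z - (z - w0))%C by ring.
  eapply Rle_trans; [apply Cmod_triangle |].
  rewrite Cmod_opp, Cmod_mult, Cmod_R, Rabs_right by lra.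
  unfold Re, Cminus, Cplus, Copp in *; cbn [fst] in *. nra.
Qed.

Lemma Cmod_oscillation_le (c : R) :
  0 <= c -> Cmod (Cexp (RtoC (- c) * (0, 1) * u)) <= exp ((rho - aA2 al T x) * c).
Proof.
  intros Hc. rewrite Cmod_Cexp. apply exp_le_compat.
  unfold u0A2, Cexp, Cplus, Cmult, RtoC, Re, Im; cbn [fst snd].
  rewrite exp_0. pose proof (SIN_bound th). assert (0 <= c * rho) by nra. nra.
Qed.

Lemma Csqrt_circle_neq0 : z <> 0%C.
Proof.
  intro E. pose proof (Re_Csqrt_pos u Hu) as H. rewrite E in H. unfold Re in H; simpl in H. lra.
Qed.

Lemma fA2_denominator_neq0 : (Cexp ((z - RtoC T) / RtoC al) + RtoC x)%C <> 0%C.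
Proof.
  intro E. pose proof fA2_denominator_lb as H. rewrite E, Cmod_0 in H.
  pose proof Cmod_Csqrt_minus_pos.
  assert (0 < x * Cmod (z - w0) / (2 * al)) by (apply Rdiv_lt_0_compat; nra).
  lra.
Qed.

Lemma Cmod_fA2_circle_le : Cmod (fA2 al T u x) <= 3 * Rpower x al / rho.
Proof.
  unfold fA2.
  assert (H2z : (RtoC 2 * z)%C <> 0%C).
  { apply Cmult_neq_0; [intro E; injection E; lra | exact Csqrt_circle_neq0]. }
  rewrite Cmod_div, !Cmod_mult, Cmod_inv, Cmod_mult, !Cmod_R
    by (exact fA2_denominator_neq0 || exact H2z).
  rewrite (Rabs_right 2), (Rabs_right x) by lra.
  pose proof fA2_denominator_lb as HD.
  pose proof Cmod_Csqrt_minus_pos as Hd.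
  pose proof Cmod_Csqrt_minus_mul_plus as Hdm.
  pose proof Cmod_Csqrt_plus_le as Hm.
  pose proof Cmod_Cexp_Csqrt_minus_le as HE.
  pose proof (Rabs_sin_div_le (al * PI) ltac:(nra)) as HS.
  pose proof (Cmod_ge_0 (z + w0)).
  pose proof (Rabs_pos (sin (al * PI) / (al * PI))).
  pose proof (Cmod_ge_0 (Cexp (z - RtoC T))).
  set (D := Cmod (Cexp ((z - RtoC T) / RtoC al) + RtoC x)%C) in *.
  set (d := Cmod (z - w0)) in *. set (m := Cmod (z + w0)) in *.
  set (S := Rabs (sin (al * PI) / (al * PI))) in *.
  set (E := Cmod (Cexp (z - RtoC T))) in *.
  set (X := Rpower x al) in *.
  assert (HD0 : 0 < D) by (eapply Rlt_le_trans; [| exact HD]; apply Rdiv_lt_0_compat; nra).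
  assert (Hz0 : 0 < Cmod z) by nra.
  replace (S * / (2 * Cmod z) * (x * E) / D) with ((S * (x * E)) / (2 * Cmod z * D))
    by (field; lra).
  apply Rle_trans with ((/ (al * PI) * (x * (3 * X))) / (x * rho / (3 * al))).
  - unfold Rdiv. apply Rmult_le_compat.
    + apply Rmult_le_pos; nra.
    + left; apply Rinv_0_lt_compat; nra.
    + apply Rmult_le_compat; [lra | nra | exact HS | nra].
    + apply Rinv_le_contravar; [apply Rdiv_lt_0_compat; nra |].
      apply Rle_trans with (2 * (m / 3) * (x * d / (2 * al))).
      * right. rewrite <- Hdm. field. lra.
      * apply Rmult_le_compat; [nra | | lra | exact HD].
        apply Rdiv_le_0_compat; [apply Rmult_le_pos |]; lra.
  - assert (HX : 0 < X) by (unfold X, Rpower; apply exp_pos).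
    apply Rle_trans with (9 / PI * (X / rho)); [right; field; nra |].
    replace (3 * X / rho) with (3 * (X / rho)) by (field; lra).
    apply Rmult_le_compat_r; [apply Rdiv_le_0_compat; lra |].
    apply Rmult_le_reg_r with PI; [lra |]. unfold Rdiv. rewrite Rmult_assoc, Rinv_l; lra.
Qed.

Lemma Cmod_integrand_le (c : R) :
  0 <= c ->
  Cmod (fA2 al T u x * Cexp (RtoC (- c) * (0, 1) * u))%C
  <= 3 * Rpower x al * exp ((rho - aA2 al T x) * c) / rho.
Proof.
  intros Hc. rewrite Cmod_mult.
  replace (3 * Rpower x al * exp ((rho - aA2 al T x) * c) / rho)
    with (3 * Rpower x al / rho * exp ((rho - aA2 al T x) * c)) by (field; lra).
  apply Rmult_le_compat; [apply Cmod_ge_0 | apply Cmod_ge_0 | |].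
  - exact Cmod_fA2_circle_le.
  - exact (Cmod_oscillation_le c Hc).
Qed.

Lemma integrand_Ccontinuous (c : R) :
  Ccontinuous (fun t => let v := (u0A2 al T x + RtoC rho * Cexp (0, t))%C in
                        (fA2 al T v x * Cexp (RtoC (- c) * (0, 1) * v))%C) th.
Proof.
  assert (Hv : Ccontinuous (fun t => (u0A2 al T x + RtoC rho * Cexp (0, t))%C) th).
  { apply Ccontinuous_plus, Ccontinuous_mult; try apply Ccontinuous_const.
    apply Ccontinuous_exp. split; [apply continuous_const | apply continuous_id]. }
  assert (Hz : Ccontinuous (fun t => Csqrt (u0A2 al T x + RtoC rho * Cexp (0, t))%C) th)
    by (apply Ccontinuous_sqrt; assumption).
  assert (Hal0 : RtoC al <> 0%C) by (intro E; injection E; lra).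
  assert (H20 : RtoC 2 <> 0%C) by (intro E; injection E; lra).
  assert (Hw : Ccontinuous (fun t => Csqrt (u0A2 al T x + RtoC rho * Cexp (0, t)) - RtoC T)%C th)
    by (apply Ccontinuous_minus; [exact Hz | apply Ccontinuous_const]).
  cbv zeta. unfold fA2.
  apply Ccontinuous_mult; [apply Ccontinuous_div; [| | exact fA2_denominator_neq0] |].
  - apply Ccontinuous_mult; apply Ccontinuous_mult.
    + apply Ccontinuous_const.
    + apply Ccontinuous_inv; [| apply Cmult_neq_0; [exact H20 | exact Csqrt_circle_neq0]].
      apply Ccontinuous_mult; [apply Ccontinuous_const | exact Hz].
    + apply Ccontinuous_const.
    + apply Ccontinuous_exp, Hw.
  - apply Ccontinuous_plus; [| apply Ccontinuous_const].
    apply Ccontinuous_exp, Ccontinuous_div; [exact Hw | apply Ccontinuous_const | exact Hal0].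
  - apply Ccontinuous_exp, Ccontinuous_mult; [apply Ccontinuous_const | exact Hv].
Qed.

End Circle.

Lemma rho0A2_le (alpha sigma N0 : R) :
  rho0A2 alpha sigma N0 <= PI * alpha * gammaA2 alpha /\
  rho0A2 alpha sigma N0 <= hA2 alpha sigma / N0 / 2.
Proof.
  unfold rho0A2.
  pose proof (Rmin_l (2 * PI * alpha * gammaA2 alpha) (hA2 alpha sigma / N0)).
  pose proof (Rmin_r (2 * PI * alpha * gammaA2 alpha) (hA2 alpha sigma / N0)).
  pose proof (Rmin_r (alpha ^ 2 * PI ^ 2)
                (Rmin (2 * PI * alpha * gammaA2 alpha) (hA2 alpha sigma / N0))).
  lra.
Qed.

Lemma M0A2_ge (sigma : R) : sigma ^ 2 / 2 <= M0A2 sigma.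
Proof.
  unfold M0A2. pose proof (Rmax_l (sigma ^ 2 / 4)
    (Rmax (1 + Rceil (9 * PI ^ 2 / sigma ^ 2)) (2 * Rceil ((1 + sqrt (PI / sigma)) ^ 4)))).
  lra.
Qed.

Lemma UpsilonA2_gamma_le (alpha sigma x : R) (N1 : nat) :
  0 < alpha -> UpsilonA2 alpha sigma N1 x ->
  0 < x /\ gammaA2 alpha <= TA2 alpha sigma N1 + alpha * ln x.
Proof.
  intros Hal [[Hxs _] _]. set (T := TA2 alpha sigma N1) in *.
  assert (Hxs0 : 0 < xstarA2 alpha T) by apply exp_pos.
  split; [lra |].
  pose proof (ln_le _ _ Hxs0 Hxs) as Hln. unfold xstarA2 in Hln. rewrite ln_exp in Hln.
  apply Rmult_le_compat_l with (r := alpha) in Hln; [| lra].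
  replace (alpha * (/ alpha * (gammaA2 alpha - T))) with (gammaA2 alpha - T) in Hln
    by (field; lra).
  lra.
Qed.

Lemma Upsilon_circle_conditions (alpha sigma N0 x rho : R) (N1 : nat) :
  10 <= N0 -> 0 < alpha < 1 -> 0 < sigma -> UpsilonA2 alpha sigma N1 x ->
  0 < rho <= rho0A2 alpha sigma N0 ->
  0 < x /\ alpha * PI < TA2 alpha sigma N1 + alpha * ln x /\
  rho <= alpha * (TA2 alpha sigma N1 + alpha * ln x) / 10.
Proof.
  intros HN0 Hal Hsig HU [Hrho Hrho0].
  destruct (UpsilonA2_gamma_le alpha sigma x N1 (proj1 Hal) HU) as [Hx Hpg].
  destruct HU as [_ Hup]. cbv zeta in Hup.
  destruct (rho0A2_le alpha sigma N0) as [Hrho_gamma Hrho_h].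
  pose proof (M0A2_ge sigma) as HM0.
  set (p := TA2 alpha sigma N1 + alpha * ln x) in *.
  set (h := hA2 alpha sigma) in *.
  assert (HPI : 3 < PI) by (generalize PI2_3_2; lra).
  (* rho0 <= pi alpha gamma, so a circle of positive radius forces gamma > 0. *)
  assert (Hgamma : 0 < gammaA2 alpha) by (assert (0 < PI * alpha) by nra; nra).
  assert (Hh : h = sigma ^ 2 * alpha ^ 2) by reflexivity.
  assert (Hh0 : 0 < h) by (rewrite Hh; apply Rmult_lt_0_compat; apply pow_lt; lra).
  assert (Hp2 : alpha ^ 2 * PI ^ 2 + sigma ^ 2 / 2 * h < p ^ 2).
  { assert (sigma ^ 2 / 2 * h <= M0A2 sigma * h) by (apply Rmult_le_compat_r; lra). lra. }
  assert (Hsh : 0 <= sigma ^ 2 / 2 * h) by (apply Rmult_le_pos; [nra | lra]).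
  assert (Hps : sigma ^ 2 * alpha / 2 <= p).
  { apply Rnot_lt_le. intro Hlt. rewrite Hh in Hp2.
    assert (0 <= sigma ^ 2 * alpha / 2) by (apply Rdiv_le_0_compat; nra).
    nra. }
  repeat split; [lra | nra |].
  apply Rle_trans with (h / 20).
  - apply Rle_trans with (h / N0 / 2); [lra |].
    unfold Rdiv. rewrite Rmult_assoc. apply Rmult_le_compat_l; [lra |].
    rewrite <- Rinv_mult. apply Rinv_le_contravar; lra.
  - rewrite Hh. nra.
Qed.

Theorem lemmaA2 :
  forall n : nat, (1 <= n)%nat ->
  exists C0 : R, exists N0bar : R, 0 < N0bar /\ exists T0 : R,
  forall N0 : R, N0bar <= N0 ->
  forall (alpha sigma : R) (N1 : nat),
    0 < alpha < 1 -> 0 < sigma -> (1 <= N1)%nat ->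
    T0 <= TA2 alpha sigma N1 ->
  forall x : R, UpsilonA2 alpha sigma N1 x ->
  forall rho : R, 0 < rho <= rho0A2 alpha sigma N0 ->
  forall s : R, (s = 1 \/ s = -1) ->
    let h := hA2 alpha sigma in
    let T := TA2 alpha sigma N1 in
    Cmod (circ_int
            (fun u => (fA2 alpha T u x
                       * Cexp (RtoC (- (2 * INR n * PI / h)) * (0, 1) * u))%C)
            (u0A2 alpha T x) rho s)
    <= C0 * (exp ((rho - aA2 alpha T x) * (2 * INR n * PI / h)) * Rpower x alpha).
Proof.
  intros n _. exists (6 * PI), 10. split; [lra |]. exists 0.
  intros N0 HN0 alpha sigma N1 Hal Hsig _ _ x Hx rho Hrho s Hs h T.
  destruct (Upsilon_circle_conditions alpha sigma N0 x rho N1 HN0 Hal Hsig Hx Hrho)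
    as (Hx0 & Hp & Hrho_p).
  pose proof (proj1 Hrho) as Hrho0.
  assert (Hc : 0 <= 2 * INR n * PI / h).
  { apply Rdiv_le_0_compat.
    - pose proof (pos_INR n). pose proof PI_RGT_0. nra.
    - unfold h, hA2. apply Rmult_lt_0_compat; apply pow_lt; lra. }
  eapply Rle_trans.
  - apply Cmod_circ_int_le; [lra | exact Hs | |].
    + intros th. apply integrand_Ccontinuous; assumption.
    + intros th. apply Cmod_integrand_le; assumption.
  - right. field. lra.
Qed.
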